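(* For every integer $m\ge0$, the following identity of rational functions in indeterminates $x,y$ holds: $$\frac{1-x^{m+1}y^{m+1}}{(1-xy)(1-x)^m(1-y)^m}=\sum_{r=0}^{m}\sum_{s=0}^{m-r}\binom{m-r}{s}\binom{m-s}{r}\frac{x^ry^s}{(1-x)^{r+s}(1-y)^{r+s}}.$$ *)

From HB Require Import structures.
From mathcomp Require Import all_boot all_order all_algebra fraction.
Set Implicit Arguments. Unset Strict Implicit. Unset Printing Implicit Defensive.
Import GRing.Theory.
Local Open Scope ring_scope.

(* Bivariate polynomials over Q: {poly {poly rat}}; rational functions in x, y
   are its field of fractions. *)
Definition Qxy := {poly {poly rat}}.
Definition RatFun := {fraction Qxy}.

Definition xR : RatFun := tofrac ((('X : {poly rat})%:P) : Qxy).
Definition yR : RatFun := tofrac ('X : Qxy).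

From HB Require Import structures.
From mathcomp Require Import all_boot all_order all_algebra fraction.
From mathcomp Require Import ring zify.

(* After multiplication by w^m, where w = (1 - x)(1 - y), the identity becomes
   sum_(r + s <= m) C(m-r,s) C(m-s,r) x^r y^s w^(m-r-s) = sum_(k <= m) (xy)^k.
   Both sides are coefficients of t^m: the left one in
   sum_j (w t)^j / ((1 - x t)(1 - y t))^(j+1) = 1 / ((1 - x t)(1 - y t) - w t),
   and (1 - x t)(1 - y t) - w t = (1 - t)(1 - x y t), whose inverse has t^m
   coefficient sum_(k <= m) (xy)^k.  Power series are handled as polynomials
   in t modulo t^(m+1). *)

Set Implicit Arguments.
Unset Strict Implicit.
Unset Printing Implicit Defensive.
Import GRing.Theory.
Local Open Scope ring_scope.

Section ModpCongruence.
Variables (F : fieldType) (d : {poly F}).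

Lemma eq_modpM {p p' q q' : {poly F}} :
  p %% d = p' %% d -> q %% d = q' %% d -> (p * q) %% d = (p' * q') %% d.
Proof.
move=> ep eqq; rewrite -(modp_mul p) eqq modp_mul mulrC.
by rewrite -(modp_mul q') ep modp_mul mulrC.
Qed.

Lemma modp_sum I (r : seq I) (P : pred I) (f : I -> {poly F}) :
  (\sum_(i <- r | P i) f i) %% d = \sum_(i <- r | P i) (f i %% d).
Proof. exact: (big_morph _ (modpD d) (mod0p d)). Qed.

Lemma modp_inv_unique Q H K :
  (Q * H) %% d = 1 %% d -> (Q * K) %% d = 1 %% d -> H %% d = K %% d.
Proof.
move=> QH QK; rewrite -[H]mulr1 -[K]mulr1.
rewrite -(eq_modpM (erefl (H %% d)) QK) -(eq_modpM (erefl (K %% d)) QH).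
by rewrite mulrCA [K * _]mulrCA [H * K]mulrC.
Qed.

End ModpCongruence.

Section TruncatedSeries.
Variables (F : fieldType) (n : nat).
Local Notation Xn := ('X^(n.+1) : {poly F}).

Lemma coef_modXn (p : {poly F}) i : (p %% Xn)`_i = if (i <= n)%N then p`_i else 0.
Proof. by rewrite -Pdiv.IdomainMonic.take_poly_modp coef_take_poly. Qed.

Lemma eq_modXn (p q : {poly F}) : (forall i, (i <= n)%N -> p`_i = q`_i) -> p %% Xn = q %% Xn.
Proof. by move=> e; apply/polyP => i; rewrite !coef_modXn; case: leqP => // /e. Qed.

Lemma mul_subCX_poly_modXn (c : F) (f : nat -> F) :
  ((1 - c%:P * 'X) * \poly_(i < n.+1) f i) %% Xn
  = (\poly_(i < n.+1) (if i is k.+1 then f i - c * f k else f 0%N)) %% Xn.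
Proof.
apply: eq_modXn => i hi; rewrite mulrBl mul1r -mulrA coefB coefCM coefXM !coef_poly.
case: i hi => [|i] /= hi; first by rewrite mulr0 subr0.
by rewrite ltnS hi ltnS (ltnW hi).
Qed.

(* The truncation at degree n of (1 - z t)^-(j+1). *)
Definition negbin_series (z : F) (j : nat) : {poly F} :=
  \poly_(i < n.+1) ('C(i + j, i)%:R * z ^+ i).

Lemma negbin_series0 z : ((1 - z%:P * 'X) * negbin_series z 0) %% Xn = 1 %% Xn.
Proof.
rewrite mul_subCX_poly_modXn; apply: eq_modXn => i hi.
rewrite coef_poly ltnS hi coef1.
by case: i {hi} => [|i]; rewrite !addn0 !binn ?exprS mul1r ?mul1r ?subrr.
Qed.

Lemma negbin_seriesS z j :
  ((1 - z%:P * 'X) * negbin_series z j.+1) %% Xn = negbin_series z j %% Xn.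
Proof.
rewrite mul_subCX_poly_modXn; apply: eq_modXn => i hi.
rewrite !coef_poly ltnS hi.
case: i {hi} => [|i]; first by rewrite !bin0.
by rewrite !addSn !addnS binS natrD exprS; ring.
Qed.

(* If U j stands for P^-(j+1), the sum is the expansion of 1 / (P - W). *)
Lemma mul_subr_geometric_modXn (P W : {poly F}) (U : nat -> {poly F}) :
    (P * U 0%N) %% Xn = 1 %% Xn ->
    (forall j, (P * U j.+1) %% Xn = U j %% Xn) ->
    Xn %| W ^+ n.+1 ->
  ((P - W) * \sum_(j < n.+1) W ^+ j * U j) %% Xn = 1 %% Xn.
Proof.
move=> PU0 PUS XnW.
have shift : (\sum_(j < n) P * (W ^+ j.+1 * U j.+1)) %% Xn
           = (\sum_(j < n) W * (W ^+ j * U j)) %% Xn.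
  rewrite !modp_sum; apply: eq_bigr => j _.
  by rewrite mulrCA -(modp_mul (W ^+ j.+1)) PUS modp_mul [W * _]mulrA -exprS.
have top : (W * (W ^+ n * U n)) %% Xn = 0.
  by apply: modp_eq0; rewrite mulrA -exprS dvdp_mulr.
rewrite mulrBl !mulr_sumr big_ord_recl big_ord_recr /= expr0 mul1r.
by rewrite modpD modpN modpD PU0 shift modpD top addr0 addrK.
Qed.

End TruncatedSeries.

Lemma exchange_big_nat_triangle (V : nmodType) n (f : nat -> nat -> V) :
  \sum_(0 <= i < n.+1) \sum_(0 <= j < (n - i).+1) f i j
  = \sum_(0 <= j < n.+1) \sum_(0 <= i < (n - j).+1) f i j.
Proof.
have square (g : nat -> nat -> V) : \sum_(0 <= i < n.+1) \sum_(0 <= j < (n - i).+1) g i j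
    = \sum_(0 <= i < n.+1) \sum_(0 <= j < n.+1) (if (i + j <= n)%N then g i j else 0).
  apply: eq_big_nat => i /andP[_ hi].
  rewrite (@big_nat_widen _ _ _ _ _ n.+1); last by rewrite ltnS leq_subr.
  rewrite big_mkcond.
  by apply: eq_bigr => j _; rewrite ltnS leq_subRL // -ltnS.
rewrite square exchange_big_nat (square (fun j i => f i j)).
by apply: eq_big_nat => j _; apply: eq_bigr => i _; rewrite addnC.
Qed.

Section DoubleBinomialSum.
Variables (F : fieldType) (n : nat).

Lemma coef_geometric_product (z : F) :
  (negbin_series n 1 0 * negbin_series n z 0)`_n = \sum_(k < n.+1) z ^+ k.
Proof.
rewrite coefMr; apply: eq_bigr => k _.
by rewrite !coef_poly ltnS leq_subr ltn_ord !addn0 !binn expr1n !mul1r.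
Qed.

Lemma coef_weighted_negbin_sum (w x y : F) :
  (\sum_(j < n.+1) (w%:P * 'X) ^+ j * (negbin_series n x j * negbin_series n y j))`_n
  = \sum_(0 <= j < n.+1) w ^+ j * \sum_(0 <= r < (n - j).+1)
      ('C(r + j, r)%:R * x ^+ r) * ('C(n - j - r + j, n - j - r)%:R * y ^+ (n - j - r)).
Proof.
rewrite coef_sum big_mkord; apply: eq_bigr => -[j /= hj] _.
rewrite exprMn -rmorphXn -mulrA coefCM coefXnM ltnNge -ltnS hj /= coefM big_mkord.
congr (_ * _); apply: eq_bigr => -[r /= hr] _; rewrite !coef_poly.
have hrn : (r < n.+1)%N by rewrite (leq_trans hr) // ltnS leq_subr.
by rewrite hrn ltnS (leq_trans (leq_subr _ _) (leq_subr _ _)).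
Qed.

Lemma weighted_negbin_sum_modXn (x y : F) :
  (\sum_(j < n.+1) (((1 - x) * (1 - y))%:P * 'X) ^+ j
                     * (negbin_series n x j * negbin_series n y j)) %% 'X^(n.+1)
  = (negbin_series n 1 0 * negbin_series n (x * y) 0) %% 'X^(n.+1).
Proof.
apply: (@modp_inv_unique _ _ ((1 - 1%:P * 'X) * (1 - (x * y)%:P * 'X))); last first.
  by rewrite mulrACA (eq_modpM (negbin_series0 n 1) (negbin_series0 n (x * y))) mulr1.
have -> : (1 - 1%:P * 'X) * (1 - (x * y)%:P * 'X)
        = (1 - x%:P * 'X) * (1 - y%:P * 'X) - ((1 - x) * (1 - y))%:P * 'X.
  by rewrite !rmorphM !rmorphB /= polyC1; ring.
apply: (mul_subr_geometric_modXn (U := fun j => negbin_series n x j * negbin_series n y j))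
  => [|j|] /=.
- by rewrite mulrACA (eq_modpM (negbin_series0 n x) (negbin_series0 n y)) mulr1.
- by rewrite mulrACA (eq_modpM (negbin_seriesS n x j) (negbin_seriesS n y j)).
- by rewrite exprMn dvdp_mull.
Qed.

Lemma sum_binomial_products (x y : F) :
  \sum_(0 <= r < n.+1) \sum_(0 <= s < (n - r).+1)
     ('C(n - r, s) * 'C(n - s, r))%:R * (x ^+ r * y ^+ s) * ((1 - x) * (1 - y)) ^+ (n - r - s)
  = \sum_(k < n.+1) (x * y) ^+ k.
Proof.
have := congr1 (fun p : {poly F} => p`_n) (weighted_negbin_sum_modXn x y).
rewrite !coef_modXn leqnn coef_weighted_negbin_sum coef_geometric_product => <-.
under [RHS]eq_big_nat => j _ do rewrite mulr_sumr.
rewrite -[RHS]exchange_big_nat_triangle; apply: eq_big_nat => r /andP[_ hr].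
(* reindex by s = n - r - j *)
rewrite big_nat_rev; apply: eq_big_nat => j /andP[_ hj]; rewrite add0n subSS.
rewrite ltnS in hr hj.
have -> : (n - (n - r - j) = r + j)%N by lia.
have -> : (n - r - (n - r - j) = j)%N by lia.
have -> : (n - j - r = n - r - j)%N by lia.
have -> : (n - r - j + j = n - r)%N by lia.
by rewrite natrM; ring.
Qed.

End DoubleBinomialSum.

Lemma one_subCX_neq0 (R : comNzRingType) (c : R) : 1 - c%:P * 'X != 0.
Proof.
apply/eqP => /(congr1 (horner^~ 0)) /eqP.
by rewrite !hornerE subr0 oner_eq0.
Qed.

Lemma one_sub_xR_neq0 : 1 - xR != 0.
Proof.
rewrite /xR -tofrac1 -tofracB tofrac_eq0 -polyC1 -rmorphB polyC_eq0.
by have := one_subCX_neq0 (1 : rat); rewrite polyC1 mul1r.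
Qed.

Lemma one_sub_yR_neq0 : 1 - yR != 0.
Proof.
rewrite /yR -tofrac1 -tofracB tofrac_eq0.
by have := one_subCX_neq0 (1 : {poly rat}); rewrite polyC1 mul1r.
Qed.

Lemma one_sub_xRyR_neq0 : 1 - xR * yR != 0.
Proof. by rewrite /xR /yR -tofracM -tofrac1 -tofracB tofrac_eq0 one_subCX_neq0. Qed.

Theorem theorem2p4 (m : nat) :
  (1 - xR ^+ m.+1 * yR ^+ m.+1) /
    ((1 - xR * yR) * (1 - xR) ^+ m * (1 - yR) ^+ m)
  = \sum_(0 <= r < m.+1) \sum_(0 <= s < (m - r).+1)
      ('C(m - r, s) * 'C(m - s, r))%:R * (xR ^+ r * yR ^+ s)
        / ((1 - xR) ^+ (r + s) * (1 - yR) ^+ (r + s)).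
Proof.
have w_neq0 : (1 - xR) * (1 - yR) != 0.
  exact: mulf_neq0 one_sub_xR_neq0 one_sub_yR_neq0.
have geometric :
    1 - (xR * yR) ^+ m.+1 = (1 - xR * yR) * \sum_(k < m.+1) (xR * yR) ^+ k.
  by rewrite -opprB subrX1 -mulNr opprB.
rewrite -mulrA -!exprMn geometric invfM mulrACA mulfV ?one_sub_xRyR_neq0 //.
rewrite mul1r -sum_binomial_products mulr_suml; apply: eq_big_nat => r /andP[_ hr].
rewrite mulr_suml; apply: eq_big_nat => s /andP[_ hs]; rewrite -exprMn.
have -> : ((1 - xR) * (1 - yR)) ^+ m
        = ((1 - xR) * (1 - yR)) ^+ (m - r - s) * ((1 - xR) * (1 - yR)) ^+ (r + s).
  by rewrite -exprD; congr (_ ^+ _); lia.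
by rewrite invfM [LHS]mulrA (mulfK (expf_neq0 _ w_neq0)).
Qed.
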